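(* Let $D$ be a regular semisimple matrix in $\mathrm{SL}_n(\mathbf k)$ with no eigenvalue equal to $1$, and let $P\subset\mathrm{SL}_n$ be the parabolic subgroup fixing a line $l\subset\mathbf k^n$, with unipotent radical $U_P$. If there exist matrices $M,N$ with $M$ unipotent, $N\in U_P(\mathbf k)$ and $NM=D$, then $l$ contains a cyclic vector for $D$. Moreover, for a given $l$, such a pair $(M,N)$, if it exists, is unique.
   Context: $\mathbf k$ is an algebraically closed field. A vector $v$ is cyclic for $D$ if $v,Dv,\dots,D^{n-1}v$ span $\mathbf k^n$. *)

From HB Require Import structures.
From mathcomp Require Import all_boot all_order all_algebra.
Set Implicit Arguments. Unset Strict Implicit. Unset Printing Implicit Defensive.
Import GRing.Theory.
Local Open Scope ring_scope.

Definition regular_semisimple (F : fieldType) (n : nat) (A : 'M[F]_n) : Prop :=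
  exists (P : 'M[F]_n) (d : 'rV[F]_n),
    P \in unitmx /\ injective (fun i : 'I_n => d 0 i) /\
    A = invmx P *m diag_mx d *m P.

Definition in_SL (F : fieldType) (n : nat) (A : 'M[F]_n) : Prop := \det A = 1.

Definition unipotent (F : fieldType) (n : nat) (A : 'M[F]_n) : Prop :=
  exists k : nat, (A - 1%:M) ^+ k = 0.

Definition in_line (F : fieldType) (n : nat) (w v : 'cV[F]_n) : Prop :=
  exists c : F, v = c *: w.

Definition in_parabolic (F : fieldType) (n : nat) (w : 'cV[F]_n) (g : 'M[F]_n) : Prop :=
  in_SL g /\ forall v, in_line w v -> in_line w (g *m v).

(* U_P = unipotent radical of P: the elements of P acting trivially on
   l and on k^n / l. *)
Definition in_unip_radical (F : fieldType) (n : nat) (w : 'cV[F]_n) (g : 'M[F]_n) : Prop :=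
  in_parabolic w g /\
  (forall v, in_line w v -> g *m v = v) /\
  (forall x : 'cV[F]_n, in_line w (g *m x - x)).

Definition cyclic_vector (F : fieldType) (n : nat) (D : 'M[F]_n) (v : 'cV[F]_n) : Prop :=
  row_full (\matrix_(i < n) (D ^+ i *m v)^T).

(* Since N acts trivially on the line l = k w and on k^n / l, the matrix D - M = (N - 1) M
   has image in l; dually, D and M agree on the row vectors orthogonal to w.  If w were not
   cyclic for D, the row vectors orthogonal to every D^i w would form a nonzero D-stable
   space on which D = M, so some v <> 0 would satisfy v (D - 1)^k = v (M - 1)^k = 0 and 1
   would be an eigenvalue of D.  The same argument makes w cyclic for the nilpotent
   matrices M - 1 and M' - 1 of two factorizations.  These differ by a matrix with image
   in l, and a nonzero such perturbation of a nilpotent matrix with cyclic vector w is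
   never nilpotent; hence M = M', and then N = D M^-1 = N'. *)

From HB Require Import structures.
From mathcomp Require Import all_boot all_order all_algebra.
From mathcomp Require Import zify.
Set Implicit Arguments. Unset Strict Implicit. Unset Printing Implicit Defensive.
Import GRing.Theory.
Local Open Scope ring_scope.

Lemma subrXX_nc (R : pzRingType) (x y : R) n :
  x ^+ n - y ^+ n = \sum_(i < n) x ^+ (n.-1 - i) * (x - y) * y ^+ i.
Proof.
pose f i := x ^+ (n - i) * y ^+ i.
have -> : x ^+ n - y ^+ n = - (f n - f 0%N) by rewrite /f subnn subn0 expr0 mulr1 mul1r opprB.
rewrite -telescope_sumr // -sumrN big_mkord; apply: eq_bigr => i _; rewrite /f.
have -> : (n - i = (n.-1 - i).+1)%N by have := ltn_ord i; lia.
have -> : (n - i.+1 = n.-1 - i)%N by lia.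
by rewrite opprB mulrBr mulrBl -exprSr -mulrA -exprS.
Qed.

Section LineImage.
Variables (F : fieldType) (n : nat) (w : 'cV[F]_n).

Definition image_in_line m (Z : 'M[F]_(n, m)) := forall x, in_line w (Z *m x).

Lemma image_in_lineB m (Z1 Z2 : 'M_(n, m)) :
  image_in_line Z1 -> image_in_line Z2 -> image_in_line (Z1 - Z2).
Proof.
move=> Z1w Z2w x; rewrite mulmxBl; have [[c1 ->] [c2 ->]] := (Z1w x, Z2w x).
by exists (c1 - c2); rewrite scalerBl.
Qed.

Lemma image_in_line_orthogonal m (Z : 'M_(n, m)) (u : 'rV_n) :
  image_in_line Z -> u *m w = 0 -> u *m Z = 0.
Proof.
move=> Zw uw; apply/rowP => j; have [c Zj] := Zw (delta_mx j 0).
have := congr1 (fun v : 'M_1 => v 0 0) (congr1 (mulmx u) Zj).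
by rewrite mulmxA -scalemxAr uw scaler0 -colE !mxE.
Qed.

Lemma unip_radical_image_in_line (N : 'M_n) m (M : 'M_(n, m)) :
  in_unip_radical w N -> image_in_line (N *m M - M).
Proof. by move=> [_ [_ Nw]] x; rewrite mulmxBl -mulmxA. Qed.

End LineImage.

Lemma eigenvalueB_scalar (F : fieldType) n (A : 'M[F]_n) a b :
  eigenvalue (A - a%:M) b = eigenvalue A (a + b).
Proof. by rewrite /eigenvalue /eigenspace (raddfD (@scalar_mx F n)) opprD addrA. Qed.

Lemma eigenvalue_of_geigenvector (F : fieldType) n (A : 'M[F]_n) a (v : 'rV_n) k :
  v != 0 -> v *m (A - a%:M) ^+ k = 0 -> eigenvalue A a.
Proof.
elim: k v => [|k IHk] v v_neq0; first by rewrite expr0 mulmx1 => /eqP; rewrite (negPf v_neq0).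
rewrite exprS mulmxA; have [vA0 _ | ] := eqVneq (v *m (A - a%:M)) 0; last exact: IHk.
apply/eigenvalueP; exists v => //; apply/eqP.
by rewrite -subr_eq0 -mul_mx_scalar -mulmxBr vA0.
Qed.

Section Krylov.
Variables (F : fieldType) (n : nat).
Local Notation N := n.+1.
Implicit Types (A B E : 'M[F]_N) (w : 'cV[F]_N) (u v f : 'rV[F]_N).

Definition krylov_mx A w : 'M_N := \matrix_(i < N) (A ^+ i *m w)^T.

Lemma cyclic_vector_unitmx A w : cyclic_vector A w = ((krylov_mx A w)^T \in unitmx).
Proof. by rewrite unitmx_tr -row_full_unit. Qed.

Lemma mulmx_krylov_tr A w f i : (f *m (krylov_mx A w)^T) 0 i = (f *m A ^+ i *m w) 0 0.
Proof. by rewrite -mulmxA !mxE; apply: eq_bigr => j _; rewrite !mxE. Qed.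

Lemma horner_mx_modp_char A p : horner_mx A (p %% char_poly A) = horner_mx A p.
Proof.
by rewrite [in RHS](divp_eq p (char_poly A)) rmorphD rmorphM /= Cayley_Hamilton mulr0 add0r.
Qed.

Lemma exp_mx_low_degree A i :
  exists2 q : {poly F}, (size q <= N)%N & A ^+ i = horner_mx A q.
Proof.
exists ('X^i %% char_poly A); last by rewrite horner_mx_modp_char rmorphXn /= horner_mx_X.
by rewrite -ltnS -(size_char_poly A) ltn_modp -size_poly_eq0 size_char_poly.
Qed.

Lemma krylov_orthogonal_all A w v :
  (forall i, (i < N)%N -> v *m A ^+ i *m w = 0) -> forall i, v *m A ^+ i *m w = 0.
Proof.
move=> vAw i; have [q size_q ->] := exp_mx_low_degree A i.
rewrite -[q]coefK poly_def rmorph_sum /= mulmx_sumr mulmx_suml big1 // => j _.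
rewrite linearZ /= rmorphXn /= horner_mx_X -scalemxAr -scalemxAl vAw ?scaler0 //.
exact: leq_trans (ltn_ord j) size_q.
Qed.

Lemma noncyclic_orthogonal_row A w : ~ cyclic_vector A w ->
  exists2 v : 'rV_N, v != 0 & forall i, v *m A ^+ i *m w = 0.
Proof.
rewrite cyclic_vector_unitmx unitmxE unitfE => /negP; rewrite negbK => /det0P [v v_neq0 vK].
exists v => //; apply: krylov_orthogonal_all => i lt_iN; apply/matrixP => a b.
by rewrite !ord1 -[i]/(val (Ordinal lt_iN)) -mulmx_krylov_tr vK !mxE.
Qed.

Lemma cyclic_vector_dual A w (r : 'I_N) : cyclic_vector A w ->
  exists f, forall i : 'I_N, f *m A ^+ i *m w = (i == r)%:R%:M.
Proof.
rewrite cyclic_vector_unitmx => Ku.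
exists (delta_mx 0 r *m invmx (krylov_mx A w)^T) => i; apply/matrixP => a b.
by rewrite !ord1 -mulmx_krylov_tr mulmxKV // !mxE eqxx eq_sym.
Qed.

Lemma cyclic_vector_mx_eq0 m A w (Z : 'M_(m, N)) : cyclic_vector A w ->
  (forall i, (i < N)%N -> Z *m (A ^+ i *m w) = 0) -> Z = 0.
Proof.
rewrite cyclic_vector_unitmx => Ku ZAw.
suff ZK0 : Z *m (krylov_mx A w)^T = 0 by rewrite -(mulmxK Ku Z) ZK0 mul0mx.
apply/matrixP => a i; move/colP/(_ a): (ZAw i (ltn_ord i)); rewrite !mxE => ZAi.
by rewrite -[RHS]ZAi; apply: eq_bigr => j _; rewrite !mxE.
Qed.

Lemma nilpotent_mx_exp_dim E k : E ^+ k = 0 -> E ^+ N = 0.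
Proof.
move=> Ek; have /dvdp_exp_XsubCP [m le_mk minE] : mxminpoly E %| ('X - 0%:P) ^+ k.
  by apply: mxminpoly_min; rewrite subr0 rmorphXn /= horner_mx_X.
have {}minE : mxminpoly E = ('X - 0%:P) ^+ m.
  by apply/eqP; rewrite -eqp_monic ?mxminpoly_monic ?monic_exp ?monicXsubC.
have le_mN : (m <= N)%N.
  have := dvdp_leq (monic_neq0 (char_poly_monic E)) (mxminpoly_dvd_char E).
  by rewrite minE size_exp_XsubC size_char_poly.
have : horner_mx E (('X - 0%:P) ^+ N) = 0 by apply/mxminpoly_minP; rewrite minE dvdp_exp2l.
by rewrite subr0 rmorphXn /= horner_mx_X.
Qed.

Lemma orthogonal_krylov_agree A B w v c k :
  (forall u, u *m w = 0 -> u *m A = u *m B) ->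
  (forall i, v *m A ^+ i *m w = 0) ->
  v *m (B - c%:M) ^+ k = v *m (A - c%:M) ^+ k.
Proof.
move=> AB; elim: k v => [|k IHk] v vAw; first by rewrite !expr0.
have vAB : v *m B = v *m A by rewrite AB // -(vAw 0%N) expr0 mulmx1.
rewrite !exprS !mulmxA !mulmxBr vAB -mulmxBr; apply: IHk => i.
rewrite mulmxBr !mulmxBl mul_mx_scalar -!scalemxAl vAw scaler0 subr0.
by rewrite -!mulmxA (mulmxA A) mulmxE -exprS mulmxA vAw.
Qed.

Lemma cyclic_vector_of_image_in_line A B w c k :
  image_in_line w (A - B) -> (B - c%:M) ^+ k = 0 -> ~~ eigenvalue A c ->
  cyclic_vector A w /\ cyclic_vector B w.
Proof.
move=> ABw Bk Ac; have AB u : u *m w = 0 -> u *m A = u *m B.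
  by move=> uw; apply/eqP; rewrite -subr_eq0 -mulmxBr (image_in_line_orthogonal ABw uw).
suff cyclicX X : (forall u, u *m w = 0 -> u *m X = u *m A) ->
    (forall u, u *m w = 0 -> u *m X = u *m B) -> cyclic_vector X w.
  by split; apply: cyclicX => // u uw; rewrite AB.
move=> XA XB; case: (boolP (row_full (krylov_mx X w))) => // /negP.
move=> /noncyclic_orthogonal_row [v v_neq0 vXw].
have vAk : v *m (A - c%:M) ^+ k = 0.
  by rewrite (orthogonal_krylov_agree c k XA vXw) -(orthogonal_krylov_agree c k XB vXw) Bk mulmx0.
by move: Ac; rewrite (eigenvalue_of_geigenvector v_neq0 vAk).
Qed.

Lemma nilpotent_cyclic_eq E E' w :
  E ^+ N = 0 -> E' ^+ N = 0 -> cyclic_vector E w -> cyclic_vector E' w ->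
  image_in_line w (E - E') -> E = E'.
Proof.
move=> EN E'N cE cE' EE'w; apply/eqP; rewrite -subr_eq0; apply/eqP.
have [f fE] := cyclic_vector_dual ord_max cE.
apply: (cyclic_vector_mx_eq0 cE') => j; elim/ltn_ind: j => j IHj lt_jN.
have [c Ec] := EE'w (E' ^+ j *m w); rewrite Ec; suff -> : c = 0 by rewrite scale0r.
(* Pair E ^+ N - E' ^+ N = 0 with f *m E ^+ j on the left and w on the right, f being
   dual to E ^+ n *m w: the summands i < j vanish by induction, those with i > j
   because E is raised to a power below n, and the summand i = j is c. *)
have term i : f *m E ^+ j *m (E ^+ (n - i) * (E - E') * E' ^+ i) *m w =
              f *m E ^+ (j + (n - i)) *m ((E - E') *m (E' ^+ i *m w)).
  by rewrite exprD -!mulmxE !mulmxA.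
have := congr1 (fun M => f *m E ^+ j *m M *m w) (subrXX_nc E E' N).
rewrite EN E'N subrr mulmx0 mul0mx mulmx_sumr mulmx_suml (bigD1 (Ordinal lt_jN)) //=.
rewrite big1 => [|i /negbTE neq_ij]; rewrite term.
  rewrite (_ : j + (n - j) = n)%N; last by rewrite subnKC // -ltnS.
  rewrite Ec -scalemxAr (fE ord_max) eqxx addr0 => /esym/matrixP/(_ 0 0).
  by rewrite !mxE mulr1.
case: (ltngtP i j) => [lt_ij | lt_ji | eq_ij]; first by rewrite IHj ?mulmx0.
  have [ci ->] := EE'w (E' ^+ i *m w).
  have lt_N : (j + (n - i) < N)%N by have := ltn_ord i; lia.
  have neq_max : (Ordinal lt_N == ord_max) = false.
    by apply: negbTE; rewrite -val_eqE /=; have := ltn_ord i; lia.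
  by rewrite -scalemxAr (fE (Ordinal lt_N)) neq_max raddf0 scaler0.
by move: neq_ij; rewrite -val_eqE /= eq_ij eqxx.
Qed.

End Krylov.

Lemma unipotent_factor_cyclic (F : fieldType) n (D M N : 'M[F]_n.+1) w k :
  ~~ eigenvalue D 1 -> (M - 1%:M) ^+ k = 0 -> in_unip_radical w N -> N *m M = D ->
  cyclic_vector D w /\ cyclic_vector (M - 1%:M) w.
Proof.
move=> D1 Mk UN NMD; have DMw : image_in_line w (D - M).
  by rewrite -NMD; apply: unip_radical_image_in_line.
split; first by case: (cyclic_vector_of_image_in_line DMw Mk D1).
have D1M1w : image_in_line w ((D - 1%:M) - (M - 1%:M)) by rewrite opprB addrA subrK.
have Mk' : (M - 1%:M - 0%:M) ^+ k = 0 by rewrite raddf0 subr0.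
have D1' : ~~ eigenvalue (D - 1%:M) 0 by rewrite eigenvalueB_scalar addr0.
by case: (cyclic_vector_of_image_in_line D1M1w Mk' D1').
Qed.

Theorem mainTheorem12 (k : closedFieldType) (n : nat) (D : 'M[k]_n) (w : 'cV[k]_n) :
  in_SL D -> regular_semisimple D -> ~~ eigenvalue D 1 -> w != 0 ->
  (forall M N : 'M[k]_n, unipotent M -> in_unip_radical w N -> N *m M = D ->
     exists v, in_line w v /\ cyclic_vector D v) /\
  (forall M N M' N' : 'M[k]_n,
     unipotent M -> in_unip_radical w N -> N *m M = D ->
     unipotent M' -> in_unip_radical w N' -> N' *m M' = D ->
     M = M' /\ N = N').
Proof.
move=> SL_D _ D1 w_neq0.
case: n D w SL_D D1 w_neq0 => [|n] D w SL_D D1 w_neq0.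
  by rewrite flatmx0 eqxx in w_neq0.
split=> [M N [e Me] UN NMD | M N M' N' [e Me] UN NMD [e' M'e] UN' NMD'].
  exists w; split; first by exists 1; rewrite scale1r.
  by case: (unipotent_factor_cyclic D1 Me UN NMD).
have [[_ cM] [_ cM']] := (unipotent_factor_cyclic D1 Me UN NMD,
                          unipotent_factor_cyclic D1 M'e UN' NMD').
have eqM : M = M'.
  apply: (addIr (- 1%:M)); apply: nilpotent_cyclic_eq (nilpotent_mx_exp_dim Me)
    (nilpotent_mx_exp_dim M'e) cM cM' _.
  rewrite (_ : M - 1%:M - (M' - 1%:M) = (N' *m M' - M') - (N *m M - M)); last first.
    by rewrite NMD NMD' opprB addrA subrK opprB [RHS]addrC addrA subrK.
  exact: image_in_lineB (unip_radical_image_in_line _ UN') (unip_radical_image_in_line _ UN).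
have uM : M \in unitmx.
  have : D \in unitmx by rewrite unitmxE SL_D unitr1.
  by rewrite -NMD unitmx_mul => /andP[].
by split=> //; rewrite -(mulmxK uM N) -(mulmxK uM N') NMD eqM NMD'.
Qed.
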